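(* Let $\mathcal X$ be a CAT(0) cube complex, $F$ a convex subcomplex, and $f$ a $0$-cube of $F$. Let $F^\perp$ denote the orthogonal complement of $F$ at $f$, and iteratively let $(F^\perp)^\perp$ denote the orthogonal complement of $F^\perp$ at $f$, etc. Then $((F^\perp)^\perp)^\perp=F^\perp$.
   Context: Two convex subcomplexes are parallel if exactly the same hyperplanes intersect them. Orthogonal complement: for a convex subcomplex $A$, let $P_A$ be the convex hull of the union of all convex subcomplexes parallel to $A$; then there is a CAT(0) cube complex $A^\perp$ (the abstract orthogonal complement) and a cubical isometric embedding $\phi_A:A\times A^\perp\to\mathcal X$ with image $P_A$ such that $\phi_A(A\times\{t\})$ are the parallel copies of $A$ and $\phi_A(A\times\{t_0\})=A$. For a $0$-cube $a\in A$, the orthogonal complement of $A$ at $a$ is the convex subcomplex $\phi_A(\{a\}\times A^\perp)$, which contains $a$. *)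

(* A CAT(0) cube complex is represented by its 1-skeleton,
   a median graph (Chepoi / Roller / Gerasimov); 0-cubes are vertices, a
   subcomplex is represented by its set of 0-cubes. *)
From Stdlib Require Import Arith List.

Unset Implicit Arguments.

Inductive walk {V : Type} (adj : V -> V -> Prop) : V -> V -> nat -> Prop :=
| walk_nil : forall x, walk adj x x 0
| walk_cons : forall x y z n, adj x y -> walk adj y z n -> walk adj x z (S n).

Definition dist {V : Type} (adj : V -> V -> Prop) (x y : V) (n : nat) : Prop :=
  walk adj x y n /\ forall m, walk adj x y m -> n <= m.

Definition interval {V : Type} (adj : V -> V -> Prop) (x y z : V) : Prop :=
  exists a b, dist adj x z a /\ dist adj z y b /\ dist adj x y (a + b).

Definition median_graph {V : Type} (adj : V -> V -> Prop) : Prop :=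
  (forall x y, adj x y -> adj y x) /\
  (forall x, ~ adj x x) /\
  (forall x y, exists n, walk adj x y n) /\
  (forall x y z, exists m,
      interval adj x y m /\ interval adj y z m /\ interval adj x z m /\
      forall m', interval adj x y m' -> interval adj y z m' ->
                 interval adj x z m' -> m' = m).

Definition gconvex {V : Type} (adj : V -> V -> Prop) (S : V -> Prop) : Prop :=
  forall x y z, S x -> S y -> interval adj x y z -> S z.

Definition convex_sub {V : Type} (adj : V -> V -> Prop) (S : V -> Prop) : Prop :=
  gconvex adj S /\ exists x, S x.

(* Djokovic-Winkler relation: edges uv and xy are dual to the same hyperplane *)
Definition Theta {V : Type} (adj : V -> V -> Prop) (u v x y : V) : Prop :=
  exists a b c d, dist adj u x a /\ dist adj v y b /\ dist adj u y c /\
    dist adj v x d /\ a + b <> c + d.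

(* the hyperplane dual to the edge uv intersects the subcomplex S *)
Definition crosses {V : Type} (adj : V -> V -> Prop) (u v : V) (S : V -> Prop) : Prop :=
  exists x y, S x /\ S y /\ adj x y /\ Theta adj u v x y.

Definition parallel {V : Type} (adj : V -> V -> Prop) (A B : V -> Prop) : Prop :=
  forall u v, adj u v -> (crosses adj u v A <-> crosses adj u v B).

Definition hull {V : Type} (adj : V -> V -> Prop) (S : V -> Prop) (x : V) : Prop :=
  forall C, gconvex adj C -> (forall y, S y -> C y) -> C x.

Definition parallel_union {V : Type} (adj : V -> V -> Prop) (A : V -> Prop) (x : V) : Prop :=
  exists B, convex_sub adj B /\ parallel adj A B /\ B x.

Definition PA {V : Type} (adj : V -> V -> Prop) (A : V -> Prop) : V -> Prop :=
  hull adj (parallel_union adj A).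

(* 1-skeleton of the product cube complex A x W (A with induced structure) *)
Definition prod_adj {V W : Type} (adj : V -> V -> Prop) (adjW : W -> W -> Prop)
  (A : V -> Prop) (p q : sig A * W) : Prop :=
  (adj (proj1_sig (fst p)) (proj1_sig (fst q)) /\ snd p = snd q) \/
  (fst p = fst q /\ adjW (snd p) (snd q)).

(* (W, adjW) is an abstract orthogonal complement of A, with
   cubical isometric embedding phi : A x W -> X and base point t0 *)
Definition orth_decomp {V W : Type} (adj : V -> V -> Prop) (A : V -> Prop)
  (adjW : W -> W -> Prop) (phi : sig A * W -> V) (t0 : W) : Prop :=
  median_graph adjW /\
  (forall p q n, dist (prod_adj adj adjW A) p q n <-> dist adj (phi p) (phi q) n) /\
  (forall x, PA adj A x <-> exists p, phi p = x) /\
  (forall B, (convex_sub adj B /\ parallel adj A B) <->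
             exists t, forall x, B x <-> exists a, phi (a, t) = x) /\
  (forall a, phi (a, t0) = proj1_sig a).

(* C is the orthogonal complement of A at the 0-cube a, i.e.
   C = phi_A({a} x A^perp) *)
Definition orth_compl {V : Type} (adj : V -> V -> Prop) (A : V -> Prop) (a : V)
  (C : V -> Prop) : Prop :=
  convex_sub adj A /\
  exists (Ha : A a) (W : Type) (adjW : W -> W -> Prop) (phi : sig A * W -> V) (t0 : W),
    orth_decomp adj A adjW phi t0 /\
    forall x, C x <-> exists t, phi (exist A a Ha, t) = x.

From Stdlib Require Import Arith List Lia Classical ClassicalEpsilon Wf_nat.

(* A Galois-connection argument: [A ⊆ (A^⊥)^⊥] for every [A], and [A ⊆ B] implies
   [B^⊥ ⊆ A^⊥].  Hence [F^⊥ ⊆ ((F^⊥)^⊥)^⊥], and antitonicity applied to [F ⊆ (F^⊥)^⊥]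
   gives the converse inclusion.
   Both facts come from the product structure [P_A ≅ A × A^⊥]: distances add over the two
   factors, so [a] is the unique point of [A] nearest to [φ_A(a, t)]; and the layers
   [φ_A(B × {t})] and the fibres [φ_A({a} × A^⊥)] are convex and pairwise parallel, because
   the Djoković–Winkler relation is transported across the squares of a median graph. *)

Section Walks.
Context {G : Type} (e : G -> G -> Prop).

Lemma walk_app x y z n m : walk e x y n -> walk e y z m -> walk e x z (n + m).
Proof.
  intro Hxy; revert z m; induction Hxy as [|x x' y n Hxx' _ IH]; intros z m Hyz; simpl.
  - exact Hyz.
  - exact (walk_cons e x x' z (n + m) Hxx' (IH z m Hyz)).
Qed.

Lemma walk_single x y : e x y -> walk e x y 1.
Proof. intro Hxy; exact (walk_cons e x y y 0 Hxy (walk_nil e y)). Qed.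

Lemma walk_length0 x y : walk e x y 0 -> x = y.
Proof. intro Hw; inversion Hw; reflexivity. Qed.

Lemma walk_length1 x y : walk e x y 1 -> e x y.
Proof.
  intro Hw; inversion Hw as [|? y' ? ? Hxy' Hy'y]; subst.
  apply walk_length0 in Hy'y; subst; exact Hxy'.
Qed.

Lemma walk_rev x y n : (forall a b, e a b -> e b a) -> walk e x y n -> walk e y x n.
Proof.
  intros Hsym Hw; induction Hw as [x|x x' y n Hxx' _ IH].
  - apply walk_nil.
  - rewrite <- Nat.add_1_r. apply walk_app with x'; [exact IH | apply walk_single, Hsym, Hxx'].
Qed.

Definition connected : Prop := forall x y, exists n, walk e x y n.

(* An arbitrary junk value when [y] is not reachable from [x]. *)
Definition distance (x y : G) : nat := epsilon (inhabits 0) (dist e x y).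

Lemma dist_distance x y n : walk e x y n -> dist e x y (distance x y).
Proof.
  intro Hw. unfold distance; apply epsilon_spec.
  destruct (dec_inh_nat_subset_has_unique_least_element (walk e x y)) as (m & Hm & _).
  - intro k; apply classic.
  - exists n; exact Hw.
  - exists m; exact Hm.
Qed.

Lemma distance_of_dist x y n : dist e x y n -> distance x y = n.
Proof.
  intros [Hw Hmin]. destruct (dist_distance x y n Hw) as [Hw' Hmin'].
  specialize (Hmin _ Hw'); specialize (Hmin' _ Hw); lia.
Qed.

Lemma distance_le_walk x y n : walk e x y n -> distance x y <= n.
Proof. intro Hw; exact (proj2 (dist_distance x y n Hw) n Hw). Qed.

Lemma walk_distance_of_walk x y n : walk e x y n -> walk e x y (distance x y).
Proof. intro Hw; exact (proj1 (dist_distance x y n Hw)). Qed.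

Lemma distance_refl x : distance x x = 0.
Proof. pose proof (distance_le_walk x x 0 (walk_nil e x)); lia. Qed.

Lemma distance_adj x y : (forall z, ~ e z z) -> e x y -> distance x y = 1.
Proof.
  intros Hirr Hxy. pose proof (distance_le_walk x y 1 (walk_single x y Hxy)) as Hle.
  pose proof (walk_distance_of_walk x y 1 (walk_single x y Hxy)) as Hw.
  destruct (distance x y) as [|k]; [|lia].
  apply walk_length0 in Hw; subst; contradiction (Hirr y).
Qed.

Section Connected.
Hypothesis e_connected : connected.

Lemma walk_distance x y : walk e x y (distance x y).
Proof. destruct (e_connected x y) as [n Hw]; exact (walk_distance_of_walk x y n Hw). Qed.

Lemma dist_distance_connected x y : dist e x y (distance x y).
Proof. destruct (e_connected x y) as [n Hw]; exact (dist_distance x y n Hw). Qed.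

Lemma distance_triangle x y z : distance x z <= distance x y + distance y z.
Proof. apply distance_le_walk, walk_app with y; apply walk_distance. Qed.

Lemma distance_eq0 x y : distance x y = 0 -> x = y.
Proof. intro H0; pose proof (walk_distance x y) as Hw; rewrite H0 in Hw; exact (walk_length0 x y Hw). Qed.

Lemma distance_eq1 x y : distance x y = 1 -> e x y.
Proof. intro H1; pose proof (walk_distance x y) as Hw; rewrite H1 in Hw; exact (walk_length1 x y Hw). Qed.

Lemma distance_sym x y : (forall a b, e a b -> e b a) -> distance x y = distance y x.
Proof.
  intro Hsym. apply Nat.le_antisymm; apply distance_le_walk, walk_rev, walk_distance; exact Hsym.
Qed.

Lemma interval_distance x y z :
  interval e x y z <-> distance x z + distance z y = distance x y.
Proof.
  split.
  - intros (a & b & Hxz & Hzy & Hxy).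
    rewrite (distance_of_dist _ _ _ Hxz), (distance_of_dist _ _ _ Hzy), (distance_of_dist _ _ _ Hxy).
    reflexivity.
  - intro Hsum. exists (distance x z), (distance z y). rewrite Hsum.
    repeat split; apply dist_distance_connected.
Qed.

End Connected.
End Walks.

Section MedianGraph.
Context {V : Type} (adj : V -> V -> Prop) (HM : median_graph adj).

Lemma median_sym x y : adj x y -> adj y x.
Proof. destruct HM as (Hsym & _); exact (Hsym x y). Qed.

Lemma median_irrefl x : ~ adj x x.
Proof. destruct HM as (_ & Hirr & _); exact (Hirr x). Qed.

Lemma median_connected : connected adj.
Proof. destruct HM as (_ & _ & Hconn & _); exact Hconn. Qed.

Lemma median_distance x y z : exists m,
  distance adj x m + distance adj m y = distance adj x y /\
  distance adj y m + distance adj m z = distance adj y z /\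
  distance adj x m + distance adj m z = distance adj x z /\
  forall m', distance adj x m' + distance adj m' y = distance adj x y ->
             distance adj y m' + distance adj m' z = distance adj y z ->
             distance adj x m' + distance adj m' z = distance adj x z -> m' = m.
Proof.
  pose proof (interval_distance adj median_connected) as Hint.
  destruct HM as (_ & _ & _ & Hmed).
  destruct (Hmed x y z) as (m & Hxy & Hyz & Hxz & Huniq).
  exists m. rewrite <- !Hint. repeat split; try assumption.
  intros m' Hxy' Hyz' Hxz'. apply Huniq; apply Hint; assumption.
Qed.

Lemma distance_adj_one x y : adj x y -> distance adj x y = 1.
Proof. apply distance_adj, median_irrefl. Qed.

(* Median graphs are bipartite: the median of [w], [u], [v] is [u] or [v]. *)
Lemma distance_adj_neq u v w : adj u v -> distance adj w u <> distance adj w v.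
Proof.
  intro Huv. pose proof (median_connected) as Hc.
  destruct (median_distance w u v) as (m & Hwu & Huv' & Hwv & _).
  rewrite (distance_adj_one u v Huv) in Huv'.
  destruct (distance adj u m) eqn:Hum.
  - apply (distance_eq0 adj Hc) in Hum; subst m. rewrite distance_refl in *. lia.
  - assert (Hmv : distance adj m v = 0) by lia.
    apply (distance_eq0 adj Hc) in Hmv; subst m.
    rewrite distance_refl, (distance_adj_one v u (median_sym u v Huv)) in *. lia.
Qed.

Lemma distance_adj_step u v w : adj u v ->
  distance adj u w + 1 = distance adj v w \/ distance adj v w + 1 = distance adj u w.
Proof.
  intro Huv. pose proof (median_connected) as Hc.
  pose proof (distance_adj_neq u v w Huv) as Hneq.
  rewrite (distance_sym adj Hc w u median_sym), (distance_sym adj Hc w v median_sym) in Hneq.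
  pose proof (distance_triangle adj Hc v u w). pose proof (distance_triangle adj Hc u v w).
  rewrite (distance_adj_one u v Huv) in *. rewrite (distance_adj_one v u (median_sym u v Huv)) in *.
  lia.
Qed.

Definition separated_by (u v x y : V) : Prop :=
  distance adj u x + distance adj v y <> distance adj u y + distance adj v x.

Lemma Theta_separated u v x y : Theta adj u v x y <-> separated_by u v x y.
Proof.
  pose proof (dist_distance_connected adj median_connected) as Hd.
  split.
  - intros (a & b & c & d & Hux & Hvy & Huy & Hvx & Hne). unfold separated_by.
    rewrite (distance_of_dist _ _ _ _ Hux), (distance_of_dist _ _ _ _ Hvy),
      (distance_of_dist _ _ _ _ Huy), (distance_of_dist _ _ _ _ Hvx).
    exact Hne.
  - intro Hsep. exists (distance adj u x), (distance adj v y), (distance adj u y), (distance adj v x).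
    repeat split; try apply Hd. exact Hsep.
Qed.

(* Halfspaces are convex.  Otherwise [y] is the median of [x], [z], [v], and so is the
   median of [x], [z], [u]; but the latter lies on a geodesic from [x] to [u]. *)
Lemma halfspace_path2 u v x y z : adj u v -> adj x y -> adj y z -> x <> z ->
  distance adj u x + 1 = distance adj v x -> distance adj u z + 1 = distance adj v z ->
  distance adj u y + 1 = distance adj v y.
Proof.
  intros Huv Hxy Hyz Hxz Hx Hz.
  pose proof (median_connected) as Hc.
  assert (Hsym : forall a b, distance adj a b = distance adj b a)
    by (intros; apply (distance_sym adj Hc), median_sym).
  destruct (distance_adj_step u v y Huv) as [Hy | Hy]; [exact Hy | exfalso].
  assert (Hdxz : distance adj x z = 2).
  { pose proof (distance_triangle adj Hc x y z).
    rewrite (distance_adj_one x y Hxy), (distance_adj_one y z Hyz) in *.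
    destruct (distance adj x z) as [|[|[|k]]] eqn:E; try lia.
    - contradiction (Hxz (distance_eq0 adj Hc x z E)).
    - exfalso; apply (distance_adj_neq x z y (distance_eq1 adj Hc x z E)).
      rewrite Hsym, (distance_adj_one x y Hxy), (distance_adj_one y z Hyz); reflexivity. }
  pose proof (distance_adj_one x y Hxy). pose proof (distance_adj_one y z Hyz).
  pose proof (distance_adj_one u v Huv).
  rewrite (Hsym u x), (Hsym v x), (Hsym u z), (Hsym v z), (Hsym u y), (Hsym v y) in *.
  destruct (median_distance x z u) as (m & Hm1 & Hm2 & Hm3 & _).
  destruct (median_distance x z v) as (m' & _ & _ & _ & Huniq).
  pose proof (distance_triangle adj Hc m u v).
  pose proof (distance_triangle adj Hc z m v).
  pose proof (distance_triangle adj Hc x y v). pose proof (distance_triangle adj Hc z y v).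
  pose proof (distance_triangle adj Hc y x u). pose proof (distance_triangle adj Hc y z u).
  pose proof (Hsym y x). pose proof (Hsym z y).
  assert (Hym' : y = m') by (apply Huniq; lia).
  assert (Hmm' : m = m') by (apply Huniq; lia).
  subst m m'. lia.
Qed.

Lemma theta_square u v x y x' y' : adj u v -> adj x y -> adj x x' -> adj y y' ->
  x <> y' -> y <> x' -> separated_by u v x y -> separated_by u v x' y'.
Proof.
  intros Huv Hxy Hxx' Hyy' Hxy' Hyx' Hsep. unfold separated_by in *.
  pose proof (distance_adj_step u v x Huv). pose proof (distance_adj_step u v y Huv).
  pose proof (distance_adj_step u v x' Huv). pose proof (distance_adj_step u v y' Huv).
  pose proof (halfspace_path2 u v x y y' Huv Hxy Hyy' Hxy').
  pose proof (halfspace_path2 v u x y y' (median_sym u v Huv) Hxy Hyy' Hxy').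
  pose proof (halfspace_path2 u v y x x' Huv (median_sym x y Hxy) Hxx' Hyx').
  pose proof (halfspace_path2 v u y x x' (median_sym u v Huv) (median_sym x y Hxy) Hxx' Hyx').
  lia.
Qed.

Lemma separated_along_ladder {I : Type} (eI : I -> I -> Prop) (g h : I -> V) u v :
  adj u v -> (forall i, adj (g i) (h i)) ->
  (forall i j, eI i j -> adj (g i) (g j) /\ adj (h i) (h j) /\ g i <> h j /\ h i <> g j) ->
  forall i j n, walk eI i j n -> separated_by u v (g i) (h i) -> separated_by u v (g j) (h j).
Proof.
  intros Huv Hrung Hrail i j n Hw.
  induction Hw as [i|i i' j n Hii' _ IH]; intro Hsep; [exact Hsep|].
  apply IH. destruct (Hrail i i' Hii') as (Hg & Hh & Hgh & Hhg).
  exact (theta_square u v _ _ _ _ Huv (Hrung i) Hg Hh Hgh Hhg Hsep).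
Qed.

End MedianGraph.

Definition induced {V : Type} (adj : V -> V -> Prop) (A : V -> Prop) (a b : sig A) : Prop :=
  adj (proj1_sig a) (proj1_sig b).

Section Product.
Context {V W : Type} (adj : V -> V -> Prop) (adjW : W -> W -> Prop) (A : V -> Prop).

Lemma walk_prod_split p q n : walk (prod_adj adj adjW A) p q n ->
  exists k1 k2, walk (induced adj A) (fst p) (fst q) k1 /\ walk adjW (snd p) (snd q) k2 /\
                k1 + k2 = n.
Proof.
  induction 1 as [p|p p' q n Hpp' _ IH].
  - exists 0, 0; repeat split; apply walk_nil.
  - destruct IH as (k1 & k2 & W1 & W2 & Hk).
    destruct Hpp' as [[Hfst Hsnd] | [Hfst Hsnd]].
    + exists (S k1), k2. rewrite Hsnd. repeat split; [exact (walk_cons _ _ _ _ _ Hfst W1) | exact W2 | lia].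
    + exists k1, (S k2). rewrite Hfst. repeat split; [exact W1 | exact (walk_cons _ _ _ _ _ Hsnd W2) | lia].
Qed.

Lemma walk_prod_fst a b s k : walk (induced adj A) a b k -> walk (prod_adj adj adjW A) (a, s) (b, s) k.
Proof.
  induction 1 as [|a a' b k Haa' _ IH]; [apply walk_nil|].
  apply walk_cons with (a', s); [left; split; [exact Haa' | reflexivity] | exact IH].
Qed.

Lemma walk_prod_snd a s t k : walk adjW s t k -> walk (prod_adj adj adjW A) (a, s) (a, t) k.
Proof.
  induction 1 as [|s s' t k Hss' _ IH]; [apply walk_nil|].
  apply walk_cons with (a, s'); [right; split; [reflexivity | exact Hss'] | exact IH].
Qed.

Lemma distance_prod : connected (prod_adj adj adjW A) -> forall a b s t,
  distance (prod_adj adj adjW A) (a, s) (b, t) = distance (induced adj A) a b + distance adjW s t.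
Proof.
  intros Hc a b s t.
  destruct (walk_prod_split _ _ _ (walk_distance _ Hc (a, s) (b, t))) as (k1 & k2 & W1 & W2 & Hk).
  simpl in W1, W2. apply Nat.le_antisymm.
  - apply distance_le_walk, walk_app with (b, s).
    + exact (walk_prod_fst _ _ _ _ (walk_distance_of_walk _ _ _ _ W1)).
    + exact (walk_prod_snd _ _ _ _ (walk_distance_of_walk _ _ _ _ W2)).
  - pose proof (distance_le_walk _ _ _ _ W1). pose proof (distance_le_walk _ _ _ _ W2). lia.
Qed.

Lemma prod_irrefl : (forall x, ~ adj x x) -> (forall t, ~ adjW t t) ->
  forall p, ~ prod_adj adj adjW A p p.
Proof. intros HirrV HirrW p [[Hp _] | [_ Hp]]; [exact (HirrV _ Hp) | exact (HirrW _ Hp)]. Qed.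

End Product.

Definition fibre {V W : Type} {A : V -> Prop} (phi : sig A * W -> V) (a : sig A) (x : V) : Prop :=
  exists t, phi (a, t) = x.

Definition layer {V W : Type} {A : V -> Prop} (phi : sig A * W -> V) (B : V -> Prop) (t : W)
  (x : V) : Prop :=
  exists b : sig A, B (proj1_sig b) /\ phi (b, t) = x.

Lemma hull_gconvex {V : Type} (adj : V -> V -> Prop) (S : V -> Prop) : gconvex adj (hull adj S).
Proof. intros x y z Hx Hy Hz C HC HS. exact (HC x y z (Hx C HC HS) (Hy C HC HS) Hz). Qed.

Section Decomposition.
Context {V W : Type} {adj : V -> V -> Prop} {A : V -> Prop} {adjW : W -> W -> Prop}
  {phi : sig A * W -> V} {t0 : W}.
Hypothesis HM : median_graph adj.
Hypothesis HD : orth_decomp adj A adjW phi t0.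

Lemma decomp_median : median_graph adjW.
Proof. destruct HD as (H & _); exact H. Qed.

Lemma decomp_dist p q n : dist (prod_adj adj adjW A) p q n <-> dist adj (phi p) (phi q) n.
Proof. destruct HD as (_ & H & _); exact (H p q n). Qed.

Lemma decomp_PA x : PA adj A x <-> exists p, phi p = x.
Proof. destruct HD as (_ & _ & H & _); exact (H x). Qed.

Lemma decomp_parallel B : convex_sub adj B /\ parallel adj A B <->
  exists t, forall x, B x <-> exists a, phi (a, t) = x.
Proof. destruct HD as (_ & _ & _ & H & _); exact (H B). Qed.

Lemma decomp_base a : phi (a, t0) = proj1_sig a.
Proof. destruct HD as (_ & _ & _ & _ & H); exact (H a). Qed.

Lemma decomp_prod_connected : connected (prod_adj adj adjW A).
Proof.
  intros p q. exists (distance adj (phi p) (phi q)).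
  apply decomp_dist, (dist_distance_connected adj (median_connected adj HM)).
Qed.

Lemma decomp_distance_prod p q :
  distance (prod_adj adj adjW A) p q = distance adj (phi p) (phi q).
Proof.
  apply distance_of_dist, decomp_dist, (dist_distance_connected adj (median_connected adj HM)).
Qed.

Lemma decomp_induced_connected : connected (induced adj A).
Proof.
  intros a b. destruct (decomp_prod_connected (a, t0) (b, t0)) as [n Hw].
  destruct (walk_prod_split _ _ _ _ _ n Hw) as (k & _ & Hk & _). exists k; exact Hk.
Qed.

Lemma decomp_distance a b s t :
  distance adj (phi (a, s)) (phi (b, t)) = distance adj (proj1_sig a) (proj1_sig b) + distance adjW s t.
Proof.
  assert (Hinduced : distance (induced adj A) a b = distance adj (proj1_sig a) (proj1_sig b)).
  { rewrite <- (decomp_base a), <- (decomp_base b), <- decomp_distance_prod.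
    rewrite (distance_prod _ _ _ decomp_prod_connected), distance_refl. lia. }
  rewrite <- decomp_distance_prod, (distance_prod _ _ _ decomp_prod_connected), Hinduced.
  reflexivity.
Qed.

Lemma decomp_distance_base a (b : sig A) s :
  distance adj (phi (a, s)) (proj1_sig b) = distance adj (proj1_sig a) (proj1_sig b) + distance adjW s t0.
Proof. rewrite <- decomp_distance, decomp_base. reflexivity. Qed.

Lemma decomp_inj p q : phi p = phi q -> p = q.
Proof.
  intro Hpq. apply (distance_eq0 _ decomp_prod_connected).
  rewrite decomp_distance_prod, Hpq. apply distance_refl.
Qed.

Lemma decomp_sig_eq (a b : sig A) : proj1_sig a = proj1_sig b -> a = b.
Proof.
  rewrite <- (decomp_base a), <- (decomp_base b). intro Hab.
  injection (decomp_inj _ _ Hab); trivial.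
Qed.

Lemma decomp_adj p q : adj (phi p) (phi q) <-> prod_adj adj adjW A p q.
Proof.
  pose proof (prod_irrefl adj adjW A (median_irrefl adj HM) (median_irrefl adjW decomp_median))
    as Hirr.
  split; intro Hpq.
  - apply (distance_eq1 _ decomp_prod_connected).
    rewrite decomp_distance_prod. exact (distance_adj_one adj HM _ _ Hpq).
  - apply (distance_eq1 _ (median_connected adj HM)).
    rewrite <- decomp_distance_prod. exact (distance_adj _ _ _ Hirr Hpq).
Qed.

Lemma decomp_fst_neq a b s t : a <> b -> phi (a, s) <> phi (b, t).
Proof. intros Hab Heq. injection (decomp_inj _ _ Heq) as Hab' _. exact (Hab Hab'). Qed.

Lemma decomp_nearest a (b : sig A) t :
  distance adj (phi (a, t)) (proj1_sig b) <= distance adj (phi (a, t)) (proj1_sig a) -> b = a.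
Proof.
  rewrite !decomp_distance_base, distance_refl. intro Hle.
  apply decomp_sig_eq, eq_sym, (distance_eq0 _ (median_connected adj HM)). lia.
Qed.

Lemma decomp_image_gconvex p q z : interval adj (phi p) (phi q) z -> exists r, phi r = z.
Proof.
  intro Hz. apply decomp_PA.
  apply (hull_gconvex adj _ (phi p) (phi q)); [apply decomp_PA; eauto | apply decomp_PA; eauto | exact Hz].
Qed.

Lemma fibre_convex a : convex_sub adj (fibre phi a).
Proof.
  pose proof (median_connected adj HM) as Hc.
  split; [| exists (phi (a, t0)), t0; reflexivity].
  intros x y z [s <-] [s' <-] Hz.
  destruct (decomp_image_gconvex _ _ _ Hz) as [[c t] <-].
  apply (interval_distance _ Hc) in Hz. rewrite !decomp_distance, distance_refl in Hz.
  pose proof (distance_triangle _ (median_connected _ decomp_median) s t s').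
  assert (Hca : c = a) by (apply decomp_sig_eq, (distance_eq0 _ Hc); lia).
  subst c. exists t; reflexivity.
Qed.

Lemma layer_convex B t : gconvex adj B -> (exists b : sig A, B (proj1_sig b)) ->
  convex_sub adj (layer phi B t).
Proof.
  pose proof (median_connected adj HM) as Hc.
  intros HB [b Hb]. split; [| exists (phi (b, t)), b; split; [exact Hb | reflexivity]].
  intros x y z (b1 & Hb1 & <-) (b2 & Hb2 & <-) Hz.
  destruct (decomp_image_gconvex _ _ _ Hz) as [[c s] <-].
  apply (interval_distance _ Hc) in Hz. rewrite !decomp_distance, distance_refl in Hz.
  pose proof (distance_triangle _ Hc (proj1_sig b1) (proj1_sig c) (proj1_sig b2)).
  assert (Hst : s = t) by (apply (distance_eq0 _ (median_connected _ decomp_median)); lia).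
  subst s. exists c. split; [| reflexivity].
  apply (HB (proj1_sig b1) (proj1_sig b2)); [exact Hb1 | exact Hb2 |].
  apply (interval_distance _ Hc). lia.
Qed.

Lemma layer_base B : (forall x, B x -> A x) -> forall x, layer phi B t0 x <-> B x.
Proof.
  intros HBA x. split.
  - intros (b & Hb & <-). rewrite decomp_base. exact Hb.
  - intro Hx. exists (exist A x (HBA x Hx)). rewrite decomp_base. split; [exact Hx | reflexivity].
Qed.

Lemma layer_crosses B t t' u v :
  adj u v -> crosses adj u v (layer phi B t) -> crosses adj u v (layer phi B t').
Proof.
  intros Huv (x & y & (b1 & Hb1 & <-) & (b2 & Hb2 & <-) & Hxy & Htheta).
  apply decomp_adj in Hxy as [[Hb12 _] | [_ Htt]];
    [| contradiction (median_irrefl _ decomp_median t Htt)].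
  assert (Hne : b1 <> b2) by (intros <-; exact (median_irrefl adj HM _ Hb12)).
  destruct (median_connected _ decomp_median t t') as [n Hw].
  exists (phi (b1, t')), (phi (b2, t')).
  split; [exists b1; split; [exact Hb1 | reflexivity] |].
  split; [exists b2; split; [exact Hb2 | reflexivity] |].
  split; [apply decomp_adj; left; split; [exact Hb12 | reflexivity] |].
  apply (Theta_separated adj HM).
  apply (separated_along_ladder adj HM adjW (fun s => phi (b1, s)) (fun s => phi (b2, s)) u v Huv)
    with t n; [| | exact Hw | apply (Theta_separated adj HM), Htheta].
  - intro s. apply decomp_adj. left; split; [exact Hb12 | reflexivity].
  - intros s s' Hss'. repeat split.
    + apply decomp_adj. right; split; [reflexivity | exact Hss'].
    + apply decomp_adj. right; split; [reflexivity | exact Hss'].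
    + exact (decomp_fst_neq _ _ _ _ Hne).
    + exact (decomp_fst_neq _ _ _ _ (not_eq_sym Hne)).
Qed.

Lemma fibre_crosses a b u v :
  adj u v -> crosses adj u v (fibre phi a) -> crosses adj u v (fibre phi b).
Proof.
  intros Huv (x & y & (s & <-) & (s' & <-) & Hxy & Htheta).
  apply decomp_adj in Hxy as [[Haa _] | [_ Hss']];
    [contradiction (median_irrefl adj HM _ Haa) |].
  destruct (decomp_induced_connected a b) as [n Hw].
  exists (phi (b, s)), (phi (b, s')).
  split; [exists s; reflexivity |]. split; [exists s'; reflexivity |].
  split; [apply decomp_adj; right; split; [reflexivity | exact Hss'] |].
  apply (Theta_separated adj HM).
  apply (separated_along_ladder adj HM (induced adj A) (fun c => phi (c, s)) (fun c => phi (c, s'))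
    u v Huv) with a n; [| | exact Hw | apply (Theta_separated adj HM), Htheta].
  - intro c. apply decomp_adj. right; split; [reflexivity | exact Hss'].
  - intros c c' Hcc'.
    assert (Hne : c <> c') by (intros <-; exact (median_irrefl adj HM _ Hcc')).
    repeat split.
    + apply decomp_adj. left; split; [exact Hcc' | reflexivity].
    + apply decomp_adj. left; split; [exact Hcc' | reflexivity].
    + exact (decomp_fst_neq _ _ _ _ Hne).
    + exact (decomp_fst_neq _ _ _ _ Hne).
Qed.

Lemma layer_parallel B t t' : parallel adj (layer phi B t) (layer phi B t').
Proof. intros u v Huv; split; apply layer_crosses; exact Huv. Qed.

Lemma fibre_parallel a b : parallel adj (fibre phi a) (fibre phi b).
Proof. intros u v Huv; split; apply fibre_crosses; exact Huv. Qed.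

End Decomposition.

Lemma parallel_ext {V : Type} (adj : V -> V -> Prop) (S S' T : V -> Prop) :
  (forall x, S x <-> S' x) -> parallel adj S T -> parallel adj S' T.
Proof.
  intros HSS' HST u v Huv. rewrite <- (HST u v Huv).
  split; intros (x & y & Hx & Hy & Hxy & Htheta); exists x, y;
    repeat split; try apply HSS'; assumption.
Qed.

Lemma PA_parallel {V : Type} (adj : V -> V -> Prop) (A B : V -> Prop) x :
  convex_sub adj B -> parallel adj A B -> B x -> PA adj A x.
Proof. intros HB HAB Hx C _ HC. apply HC. exists B; auto. Qed.

Lemma sub_orth_compl_orth_compl {V : Type} (adj : V -> V -> Prop) (A C C' : V -> Prop) a :
  median_graph adj -> orth_compl adj A a C -> orth_compl adj C a C' ->
  forall x, A x -> C' x.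
Proof.
  intros HM [_ (Ha & W & adjW & phi & t0 & HD & HC)] [_ (Hc & W' & adjW' & psi & s0 & HD' & HC')]
    b Hb.
  assert (Hpar : parallel adj C (fibre phi (exist A b Hb))).
  { apply parallel_ext with (fibre phi (exist A a Ha)); [intro; symmetry; apply HC |].
    apply (fibre_parallel HM HD). }
  destruct (proj1 (decomp_parallel HD' _) (conj (fibre_convex HM HD _) Hpar)) as [s Hs].
  destruct (proj1 (Hs b)) as [c Hcb]; [exists t0; exact (decomp_base HD (exist A b Hb)) |].
  assert (Hca : exist C a Hc = c).
  { apply (decomp_nearest HM HD' c _ s). rewrite Hcb. simpl.
    destruct (proj1 (HC _) (proj2_sig c)) as [t Ht].
    rewrite <- Ht, !(distance_sym adj (median_connected adj HM) b) by apply (median_sym adj HM).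
    pose proof (decomp_distance_base HM HD (exist A a Ha) (exist A b Hb) t) as Hdist.
    simpl in Hdist. lia. }
  apply HC'. exists s. rewrite Hca. exact Hcb.
Qed.

Lemma orth_compl_antitone {V : Type} (adj : V -> V -> Prop) (A B CA CB : V -> Prop) a :
  median_graph adj -> orth_compl adj A a CA -> orth_compl adj B a CB ->
  (forall x, A x -> B x) -> forall x, CB x -> CA x.
Proof.
  intros HM [[HAconv _] (Ha & W & adjW & phi & t0 & HD & HCA)]
    [_ (Hb & W' & adjW' & psi & s0 & HD' & HCB)] HAB x Hx.
  apply HCB in Hx as [r Hr].
  assert (HxPA : PA adj A x).
  { apply (PA_parallel adj A (layer psi A r)).
    - apply (layer_convex HM HD' A r HAconv). exists (exist B a Hb); exact Ha.
    - apply parallel_ext with (layer psi A s0); [exact (layer_base HD' A HAB) |].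
      apply (layer_parallel HM HD').
    - exists (exist B a Hb). split; [exact Ha | exact Hr]. }
  apply (decomp_PA HD) in HxPA as [[c t] Hct].
  assert (Hc : exist B (proj1_sig c) (HAB _ (proj2_sig c)) = exist B a Hb).
  { apply (decomp_nearest HM HD' _ _ r). rewrite Hr, <- Hct. simpl.
    pose proof (decomp_distance_base HM HD c c t) as Hcc.
    pose proof (decomp_distance_base HM HD c (exist A a Ha) t) as Hca.
    simpl in Hca. rewrite distance_refl in Hcc. lia. }
  assert (Hca : c = exist A a Ha)
    by (apply (decomp_sig_eq HM HD); exact (f_equal (@proj1_sig _ _) Hc)).
  apply HCA. exists t. rewrite <- Hca. exact Hct.
Qed.

Theorem mainTheorem9 (V : Type) (adj : V -> V -> Prop) (F : V -> Prop) (f : V)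
  (C1 C2 C3 : V -> Prop) :
  median_graph adj -> convex_sub adj F -> F f ->
  orth_compl adj F f C1 -> orth_compl adj C1 f C2 -> orth_compl adj C2 f C3 ->
  forall x, C3 x <-> C1 x.
Proof.
  (* [convex_sub adj F] and [F f] are already part of [orth_compl adj F f C1]. *)
  intros HM _ _ HC1 HC2 HC3 x. split.
  - apply (orth_compl_antitone adj F C2 C1 C3 f HM HC1 HC3).
    exact (sub_orth_compl_orth_compl adj F C1 C2 f HM HC1 HC2).
  - exact (sub_orth_compl_orth_compl adj C1 C2 C3 f HM HC2 HC3 x).
Qed.
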